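(* Let $G$ be a finite group and $t$ a positive integer. Then $$e(G)\le t+\mu^*(G,t)+\sum_{p\in\pi(G)}\mu_p(G,t).$$
   Context: $e(G)$ is the expected number of uniformly random elements of $G$, drawn independently with replacement, needed until they generate $G$; equivalently $e(G)=\sum_{n\ge0}(1-P_G(n))$ with $P_G(n)$ the probability that $n$ random elements generate $G$. $\pi(G)$ is the set of primes dividing $|G|$. A maximal subgroup $M$ of $G$ is of type A if the socle of $G/\mathrm{core}_G(M)$ is abelian and of type B otherwise; $m_n^A(G)$ (resp. $m_n^B(G)$) is the number of maximal subgroups of $G$ of type A (resp. B) of index $n$. Define $\mu^*(G,t)=\sum_{k\ge t}\sum_{n\ge 5} m_n^B(G)/n^k$ and, for a prime $p$, $\mu_p(G,t)=\sum_{k\ge t}\sum_{n\ge1} m^A_{p^n}(G)/p^{nk}$. *)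

From HB Require Import structures.
From mathcomp Require Import all_boot all_fingroup all_solvable.
From Stdlib Require Import Reals.
Set Implicit Arguments.
Unset Strict Implicit.
Unset Printing Implicit Defensive.

Local Open Scope group_scope.

Definition socle (gT : finGroupType) (H : {set gT}) : {set gT} :=
  <<\bigcup_(M : {group gT} | (M \subset H) && minnormal M H) M>>.

Definition typeA (gT : finGroupType) (G M : {group gT}) : bool :=
  abelian (socle (G / gcore M G)).

Definition mA (gT : finGroupType) (G : {group gT}) (n : nat) : nat :=
  #|[set M : {group gT} | [&& maximal M G, typeA G M & #|G : M| == n]]|.
Definition mB (gT : finGroupType) (G : {group gT}) (n : nat) : nat :=
  #|[set M : {group gT} | [&& maximal M G, ~~ typeA G M & #|G : M| == n]]|.

Definition ngen (gT : finGroupType) (G : {group gT}) (n : nat) : nat :=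
  #|[set x : n.-tuple gT | all (fun y => y \in G) x &&
                            (<<[set y | y \in x]>> == G)]|.

Local Open Scope R_scope.

Definition PG (gT : finGroupType) (G : {group gT}) (n : nat) : R :=
  INR (ngen G n) / INR (#|G| ^ n)%nat.

(* n-th term of the series e(G) = sum_{n >= 0} (1 - P_G(n)). *)
Definition e_term (gT : finGroupType) (G : {group gT}) (n : nat) : R :=
  1 - PG G n.

(* i-th term (k = t + i) of mu^*(G,t) = sum_{k>=t} sum_{n>=5} m_n^B(G)/n^k;
   m_n^B(G) = 0 for n > |G|, so the inner sum is over 5 <= n <= |G|. *)
Definition muStar_term (gT : finGroupType) (G : {group gT}) (t i : nat) : R :=
  \big[Rplus/0]_(5 <= n < #|G|.+1) (INR (mB G n) / (INR n) ^ (t + i)).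

(* i-th term (k = t + i) of mu_p(G,t) = sum_{k>=t} sum_{n>=1} m^A_{p^n}(G)/p^{nk};
   m^A_{p^n}(G) = 0 once p^n > |G|, in particular for n > |G|. *)
Definition mup_term (gT : finGroupType) (G : {group gT}) (p t i : nat) : R :=
  \big[Rplus/0]_(1 <= n < #|G|.+1)
     (INR (mA G (p ^ n)%nat) / (INR p) ^ (n * (t + i))).

From HB Require Import structures.
From mathcomp Require Import all_boot all_fingroup all_solvable.
From mathcomp Require Import integral_char.
From Stdlib Require Import Reals Lra.
Set Implicit Arguments.
Unset Strict Implicit.
Unset Printing Implicit Defensive.

(* A k-tuple fails to generate G iff it lies in a maximal subgroup M, so
   1 - P_G(k) <= \sum_M |G : M|^-k.  Modulo K = core_G(M), an abelian minimal
   normal subgroup of G/K complements M/K; hence a maximal subgroup of type A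
   has index p^n with p dividing |G|.  One of type B has index at least 5:
   a Sylow q-subgroup with q > |G : M| fixes every coset of M, so every prime
   divisor of |G/K| is at most |G : M|; were |G : M| <= 4, G/K would be a
   {2,3}-group, solvable by Burnside's p^a q^b theorem, with abelian socle.
   Grouping the maximal subgroups by index bounds the k-th term of e(G), for
   k >= t, by the (k - t)-th terms of mu^*(G,t) and the mu_p(G,t); each of the
   first t terms is at most 1. *)

Local Open Scope group_scope.

Lemma abelian_socle (gT : finGroupType) (H : {group gT}) :
  (forall N : {group gT}, N \subset H -> minnormal N H -> abelian N) ->
  abelian (socle H).
Proof.
move=> abH; rewrite /socle abelian_gen /abelian.
apply/bigcupsP => N1 /andP[sN1H minN1]; rewrite centsC.
apply/bigcupsP => N2 /andP[sN2H minN2]; rewrite centsC.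
have [-> | neqN12] := eqVneq N1 N2; first exact: abH.
have /mingroupP[/andP[_ nN1H] min1] := minN1.
have /mingroupP[/andP[_ nN2H] min2] := minN2.
have tiN12 : N1 :&: N2 = 1.
  apply/eqP; apply: contraR neqN12 => ntN12.
  have nN12H : H \subset 'N(N1 :&: N2) by rewrite normsI.
  have /(_ (subsetIl _ _)) e1 := min1 [group of N1 :&: N2] (introT andP (conj ntN12 nN12H)).
  have /(_ (subsetIr _ _)) e2 := min2 [group of N1 :&: N2] (introT andP (conj ntN12 nN12H)).
  by apply/eqP/val_inj; rewrite /= -[LHS]e1 -[RHS]e2.
apply/commG1P/trivgP; rewrite -tiN12 commg_subI // subsetI subxx.
  by rewrite (subset_trans sN1H).
by rewrite (subset_trans sN2H).
Qed.

Lemma index_corefree_maximal (gT : finGroupType) (H L N : {group gT}) :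
  maximal L H -> gcore L H = 1 -> N \subset H -> minnormal N H -> abelian N ->
  #|H : L| = #|N|.
Proof.
move=> maxL coreL1 sNH minN abN.
have /mingroupP[/andP[ntN nNH] _] := minN.
have sLH : L \subset H := proper_sub (maxgroupp maxL).
have nNL : L \subset 'N(N) := subset_trans sLH nNH.
have not_sNL : ~~ (N \subset L).
  by apply: contra ntN => sNL; rewrite -subG1 -coreL1 gcore_max.
have defH : N * L = H.
  case/maxgroupP: maxL => _ maxL.
  apply/eqP; rewrite eqEproper mul_subG //= -norm_joinEr //.
  by apply: contra not_sNL => /maxL <-; rewrite ?joing_subl ?joing_subr.
have tiNL : N :&: L = 1.
  apply/trivgP; rewrite -coreL1 gcore_max ?subsetIr // -defH mul_subG //.
    by rewrite (subset_trans _ (cent_sub _)) // (subset_trans abN) ?centS ?subsetIl.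
  by rewrite normsI ?normG.
by rewrite -divgS // -defH TI_cardMg // mulnK.
Qed.

Section MaximalSubgroupCore.

Variables (gT : finGroupType) (G M : {group gT}).
Hypothesis maxM : maximal M G.

Let K := gcore M G.
Let sMG : M \subset G := proper_sub (maxgroupp maxM).
Let nsKG : K <| G := gcore_normal sMG.
Let nKG : G \subset 'N(K) := normal_norm nsKG.
Let nsKM : K <| M := normalS (gcore_sub _ _) sMG nsKG.

Lemma maximal_quotient_core : maximal (M / K) (G / K).
Proof. by rewrite quotient_maximal. Qed.

Lemma index_quotient_core : #|G / K : M / K| = #|G : M|.
Proof. by rewrite index_quotient_eq // subIset // gcore_sub orbT. Qed.

Lemma gcore_quotient_core : gcore (M / K) (G / K) = 1.
Proof.
set C := gcore _ _.
have nsCG : C <| G / K := gcore_normal (quotientS _ sMG).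
have nsPG : coset K @*^-1 C <| G.
  by rewrite -[X in _ <| X](quotientGK nsKG) cosetpre_normal.
have sPK : coset K @*^-1 C \subset K.
  by rewrite gcore_max ?normal_norm // sub_cosetpre_quo // gcore_sub.
apply/trivgP; rewrite -(trivg_quotient K).
by apply: subset_trans (quotientS _ sPK); rewrite cosetpreK.
Qed.

Lemma typeA_index : typeA G M ->
  exists p n, [/\ p \in primes #|G|, 0 < n, n <= #|G| & #|G : M| = expn p n].
Proof.
move=> abS.
have ntGK : G / K != 1.
  apply: contraTneq (maxgroupp maximal_quotient_core) => ->.
  by rewrite properE sub1G andbF.
have [N minN sNGK] := minnormal_exists ntGK (normG _).
have abN : abelian N.
  by apply: abelianS abS; rewrite sub_gen // (bigcup_sup N) ?sNGK.
have idxN : #|G : M| = #|N|.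
  rewrite -index_quotient_core.
  exact: index_corefree_maximal maximal_quotient_core gcore_quotient_core sNGK minN abN.
have [_ _ /abelem_pgroup pN] := minnormal_solvable minN (subxx _) (abelian_sol abN).
have ntN : 1 < #|N| by rewrite cardG_gt1; case/mingroupP: minN => /andP[].
have dvdNG : #|N| %| #|G|.
  by rewrite (dvdn_trans (cardSg sNGK)) // card_quotient // dvdn_indexg.
set p := pdiv #|N| in pN; have p_pr : prime p := pdiv_prime ntN.
exists p, (logn p #|N|); split.
- by rewrite mem_primes p_pr cardG_gt0 (dvdn_trans (pdiv_dvd _)).
- by rewrite logn_gt0 mem_primes p_pr (ltnW ntN) pdiv_dvd.
- apply: leq_trans (dvdn_leq (cardG_gt0 G) dvdNG).
  by rewrite {2}(card_pgroup pN) ltnW // ltn_expl // prime_gt1.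
- by rewrite idxN {1}(card_pgroup pN).
Qed.

Lemma primes_quotient_core_le_index q : q \in primes #|G / K| -> q <= #|G : M|.
Proof.
move=> q_pi; rewrite leqNgt; apply/negP => lt_idx_q.
have [Q sylQ] := Sylow_exists q G.
have [sQG qQ q'iQ] := and3P sylQ.
have sQK : Q \subset K.
  rewrite /K -astabRs_rcosets; apply/subsetP => a Qa; apply/astabP => X GMX.
  have sQX : orbit 'Rs Q X \subset rcosets M G.
    apply/subsetP => Y /imsetP[b Qb ->]; case/imsetP: GMX => g Gg ->.
    rewrite /= !rcosetE -rcosetM mem_rcosets (subsetP (mulG_subr _ _)) // groupM //.
    exact: (subsetP sQG).
  have: q.-nat #|orbit 'Rs Q X| by rewrite card_orbit (pnat_dvd (dvdn_indexg _ _)).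
  case/p_natP => [[|k] qk].
    by move/card_orbit1: qk => oX; have := mem_orbit 'Rs X Qa; rewrite oX => /set1P.
  have := leq_ltn_trans (subset_leq_card sQX) lt_idx_q.
  rewrite qk expnS ltnNge leq_pmulr // expn_gt0 prime_gt0 //.
  by move: q_pi; rewrite mem_primes => /andP[].
have q'GK : q^'.-nat #|G : K| := pnat_dvd (indexgS G sQK) q'iQ.
by move: q_pi; rewrite card_quotient // => /(pnatPpi q'GK); rewrite !inE eqxx.
Qed.

Lemma typeB_index : ~~ typeA G M -> 5 <= #|G : M|.
Proof.
rewrite leqNgt; apply: contraNN => lt_idx5.
apply: abelian_socle => N sNGK minN.
have solGK : solvable (G / K).
  apply: Burnside_p_a_q_b; apply: (@leq_trans (size [:: 2; 3])) => //.
  apply: uniq_leq_size (primes_uniq _) _ => q q_pi.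
  have le_q4 : q <= 4 := leq_trans (primes_quotient_core_le_index q_pi) lt_idx5.
  have q_pr : prime q by move: q_pi; rewrite mem_primes => /andP[].
  by move: le_q4 q_pr; case: q {q_pi} => [|[|[|[|[|q]]]]].
by have [_ _ /abelem_abelian] := minnormal_solvable minN sNGK solGK.
Qed.

End MaximalSubgroupCore.

Lemma card_tuples_in (T : finType) (A : {set T}) k :
  #|[set x : k.-tuple T | all (fun y => y \in A) x]| = expn #|A| k.
Proof.
have -> : [set x : k.-tuple T | all (fun y => y \in A) x] =
          [set [tuple (f : {ffun 'I_k -> T}) i | i < k] | f in ffun_on (mem A)].
  apply/setP => x; rewrite inE; apply/idP/imsetP => [/all_tnthP Ax | [f /ffun_onP Af ->]].
    exists [ffun i => tnth x i]; first by apply/ffun_onP => i; rewrite ffunE Ax.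
    by apply: eq_from_tnth => i; rewrite tnth_mktuple ffunE.
  by apply/all_tnthP => i; rewrite tnth_mktuple Af.
rewrite card_imset ?card_ffun_on ?card_ord // => f g efg; apply/ffunP => i.
by rewrite -(tnth_mktuple f) -(tnth_mktuple g) efg.
Qed.

Lemma leq_card_bigcup (T I : finType) (P : pred I) (F : I -> {set T}) :
  #|\bigcup_(i | P i) F i| <= \sum_(i | P i) #|F i|.
Proof.
elim/big_rec2: _ => [|i m U _ leUm]; first by rewrite cards0.
exact: leq_trans (leq_card_setU _ _).1 (leq_add _ leUm).
Qed.

Lemma card_tuples_le_ngen_maximal (gT : finGroupType) (G : {group gT}) k :
  expn #|G| k <= ngen G k + \sum_(M : {group gT} | maximal M G) expn #|M| k.
Proof.
pose In (A : {set gT}) := [set x : k.-tuple gT | all (fun y => y \in A) x].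
have -> : \sum_(M : {group gT} | maximal M G) expn #|M| k =
          \sum_(M : {group gT} | maximal M G) #|In M|.
  by apply: eq_bigr => M _; rewrite card_tuples_in.
rewrite -card_tuples_in -/(In G).
have sGgen : In G \subset [set x in In G | <<[set y | y \in x]>> == G]
                       :|: \bigcup_(M : {group gT} | maximal M G) In M.
  apply/subsetP => x Gx; rewrite inE [x \in [set _ in _ | _]]inE Gx /=.
  move: Gx; rewrite inE => Gx.
  have [//|not_genG] := eqVneq; apply/bigcupP.
  have sXG : <<[set y | y \in x]>> \subset G.
    by rewrite gen_subG; apply/subsetP => y; rewrite inE; apply: (allP Gx).
  have [genG | [M maxM sXM]] := maximal_exists sXG; first by rewrite genG eqxx in not_genG.
  exists M; rewrite // inE; apply/allP => y xy.
  by apply: (subsetP sXM); rewrite mem_gen ?inE.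
apply: leq_trans (subset_leq_card sGgen) _.
apply: leq_trans (leq_card_setU _ _).1 _.
rewrite leq_add ?leq_card_bigcup // /ngen; apply: subset_leq_card.
by apply/subsetP => x; rewrite !inE.
Qed.

Local Close Scope group_scope.
Local Open Scope R_scope.

HB.instance Definition _ := Monoid.isComLaw.Build R 0 Rplus
  (fun x y z => esym (Rplus_assoc x y z)) Rplus_comm Rplus_0_l.

(* In the definitions, [^] on [nat] denotes Stdlib's [Nat.pow], not [expn]. *)
Lemma expn_Natpow (m n : nat) : expn m n = Nat.pow m n.
Proof. by elim: n => // n IHn; rewrite expnS IHn. Qed.

Lemma Rinv_ge0 (x : R) : 0 <= x -> 0 <= / x.
Proof. by case=> [x_gt0 | <-]; [left; apply: Rinv_0_lt_compat | rewrite Rinv_0; lra]. Qed.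

Lemma INR_sum (I : Type) (s : seq I) (P : pred I) (F : I -> nat) :
  INR (\sum_(i <- s | P i) F i) = \big[Rplus/0]_(i <- s | P i) INR (F i).
Proof. by apply: (big_morph INR) => // m n; rewrite plus_INR. Qed.

Lemma sumR_mulr (I : Type) (s : seq I) (P : pred I) (F : I -> R) c :
  \big[Rplus/0]_(i <- s | P i) F i * c = \big[Rplus/0]_(i <- s | P i) (F i * c).
Proof.
by apply: (big_morph (fun x => x * c)) => [x y|]; rewrite ?Rmult_plus_distr_r ?Rmult_0_l.
Qed.

Lemma sumR_le (I : Type) (s : seq I) (P : pred I) (F H : I -> R) :
  (forall i, P i -> F i <= H i) ->
  \big[Rplus/0]_(i <- s | P i) F i <= \big[Rplus/0]_(i <- s | P i) H i.
Proof. by move=> leFH; apply: big_ind2 => *; [lra | apply: Rplus_le_compat | auto]. Qed.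

Lemma sumR_ge0 (I : Type) (s : seq I) (P : pred I) (F : I -> R) :
  (forall i, P i -> 0 <= F i) -> 0 <= \big[Rplus/0]_(i <- s | P i) F i.
Proof. by move=> F0; apply: big_ind => *; [lra | lra | auto]. Qed.

Lemma sumR_ge_term (I : eqType) (s : seq I) (F : I -> R) j :
  j \in s -> (forall i, 0 <= F i) -> F j <= \big[Rplus/0]_(i <- s) F i.
Proof.
move=> sj F0; rewrite (big_rem j sj) /=.
by have := @sumR_ge0 _ (rem j s) xpredT F (fun i _ => F0 i); lra.
Qed.

Lemma sumR_indicator (I : finType) (P Q : pred I) c :
  \big[Rplus/0]_(i | P i) (if Q i then c else 0) = INR #|[set i | P i && Q i]| * c.
Proof.
rewrite -big_mkcondr cardsE -sum1_card INR_sum sumR_mulr.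
by apply: eq_bigr => i _; rewrite Rmult_1_l.
Qed.

Lemma sumR_le_fibres (I : finType) (P : pred I) (g : I -> nat) (F : nat -> R)
    (s : seq nat) :
  (forall n, 0 <= F n) -> (forall i, P i -> g i \in s) ->
  \big[Rplus/0]_(i | P i) F (g i) <=
  \big[Rplus/0]_(n <- s) (INR #|[set i | P i && (g i == n)]| * F n).
Proof.
move=> F0 sg.
rewrite [X in _ <= X](eq_bigr (fun n => \big[Rplus/0]_(i | P i) (if g i == n then F n else 0)));
  last by move=> n _; rewrite sumR_indicator.
rewrite exchange_big /=; apply: sumR_le => i Pi.
have := @sumR_ge_term _ s (fun n => if g i == n then F n else 0) _ (sg i Pi).
rewrite eqxx; apply=> n; case: eqP => _; [exact: F0 | lra].
Qed.

Lemma Un_cv_const (c : R) : Un_cv (fun _ => c) c.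
Proof. by move=> eps eps0; exists O => n _; rewrite /Rdist Rminus_diag Rabs_R0. Qed.

Lemma infinite_sum_plus (f g : nat -> R) lf lg :
  infinite_sum f lf -> infinite_sum g lg ->
  infinite_sum (fun n => f n + g n) (lf + lg).
Proof.
move=> sf sg; apply: Un_cv_ext (CV_plus _ _ _ _ sf sg) => n.
by rewrite sum_plus.
Qed.

Lemma infinite_sum_big (I : eqType) (s : seq I) (F : I -> nat -> R) (L : I -> R) :
  (forall j, j \in s -> infinite_sum (F j) (L j)) ->
  infinite_sum (fun n => \big[Rplus/0]_(j <- s) F j n) (\big[Rplus/0]_(j <- s) L j).
Proof.
elim: s => [_ | j s IHs sF].
  rewrite big_nil; apply: Un_cv_ext (Un_cv_const 0) => n.
  by rewrite (sum_eq _ (fun _ => 0)) ?sum_cte ?Rmult_0_l // => i _; rewrite big_nil.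
have sFs : forall i, i \in s -> infinite_sum (F i) (L i).
  by move=> i si; apply: sF; rewrite inE si orbT.
rewrite big_cons; apply: Un_cv_ext (infinite_sum_plus (sF j (mem_head _ _)) (IHs sFs)) => n.
by apply: sum_eq => i _; rewrite big_cons.
Qed.

Definition geom_tail (c x : R) (t : nat) : R := c / x ^ t / (1 - / x).

Lemma infinite_sum_geom_tail (c x : R) (t : nat) : 1 < x ->
  infinite_sum (fun i => c / x ^ (t + i)) (geom_tail c x t).
Proof.
move=> gt1x.
have ltx1 : Rabs (/ x) < 1.
  rewrite Rabs_pos_eq; last by left; apply: Rinv_0_lt_compat; lra.
  by rewrite -Rinv_1; apply: Rinv_lt_contravar; lra.
have geom : Un_cv (sum_f_R0 (fun i => 1 * (/ x) ^ i)) (/ (1 - / x)) := GP_infinite _ ltx1.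
apply: Un_cv_ext (CV_mult _ _ _ _ (Un_cv_const (c / x ^ t)) geom) => n.
rewrite scal_sum; apply: sum_eq => i _.
by rewrite pow_add pow_inv; field; split; apply: pow_nonzero; lra.
Qed.

Lemma partial_sum_le_shift (e S : nat -> R) (t : nat) :
  (forall n, e n <= 1) -> (forall i, 0 <= S i) -> (forall i, e (t + i)%nat <= S i) ->
  forall N, sum_f_R0 e N <= INR t + sum_f_R0 S N.
Proof.
elim: t e => [|t IHt] e le1 S0 leS N.
  by rewrite Rplus_0_l; apply: sum_Rle => n _; apply: leS.
have IHe := IHt (fun n => e n.+1) (fun n => le1 n.+1) S0 (fun i => leS i).
rewrite S_INR; case: N => [|N].
  by have := le1 O; have := pos_INR t; have := S0 O; rewrite /=; lra.
rewrite decomp_sum; last exact: Nat.lt_0_succ.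
have := IHe N; have := le1 O; have := S0 N.+1; rewrite /=; lra.
Qed.

Lemma infinite_sum_le_shift (e S : nat -> R) (t : nat) (L : R) :
  (forall n, 0 <= e n <= 1) -> (forall i, e (t + i)%nat <= S i) -> infinite_sum S L ->
  exists l, infinite_sum e l /\ l <= INR t + L.
Proof.
move=> e01 leS sumS.
have S0 i : 0 <= S i by have := e01 (t + i)%nat; have := leS i; lra.
have ub N : sum_f_R0 e N <= INR t + L.
  have := partial_sum_le_shift (fun n => proj2 (e01 n)) S0 leS N.
  by have := sum_incr S N L sumS S0; lra.
have [l sum_e] : {l | Un_cv (sum_f_R0 e) l}.
  apply: growing_cv; first by move=> n /=; have := e01 n.+1; lra.
  by exists (INR t + L) => _ [n ->]; apply: ub.
by exists l; split; last exact: Rle_cv_lim ub sum_e (Un_cv_const _).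
Qed.

Section ProbabilityOfGeneration.

Variables (gT : finGroupType) (G : {group gT}).

Lemma ngen_le n : (ngen G n <= expn #|G| n)%nat.
Proof.
rewrite -card_tuples_in; apply: subset_leq_card.
by apply/subsetP => x; rewrite !inE => /andP[].
Qed.

Lemma card_tuples_gt0 n : 0 < INR (#|G| ^ n)%nat.
Proof. by apply/lt_0_INR/ltP; rewrite -expn_Natpow expn_gt0 cardG_gt0. Qed.

Lemma e_term_bounds n : 0 <= e_term G n <= 1.
Proof.
have PG_ge0 : 0 <= PG G n by apply: Rmult_le_pos (pos_INR _) (Rinv_ge0 (pos_INR _)).
have PG_le1 : PG G n <= 1.
  rewrite /PG -(Rdiv_diag (INR (#|G| ^ n)%nat)); last exact/Rgt_not_eq/card_tuples_gt0.
  apply/Rmult_le_compat_r/le_INR/leP; first exact/Rinv_ge0/pos_INR.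
  by rewrite -expn_Natpow ngen_le.
by rewrite /e_term; lra.
Qed.

Lemma e_term_le_sum_maximal k :
  e_term G k <= \big[Rplus/0]_(M : {group gT} | maximal M G) / INR #|G : M|%g ^ k.
Proof.
have cardGk_gt0 := card_tuples_gt0 k.
have -> : \big[Rplus/0]_(M : {group gT} | maximal M G) / INR #|G : M|%g ^ k =
          \big[Rplus/0]_(M : {group gT} | maximal M G) (INR (expn #|M| k) / INR (#|G| ^ k)%nat).
  apply: eq_bigr => M /maxgroupp/proper_sub sMG.
  rewrite -(Lagrange sMG) -expn_Natpow expnMn !expn_Natpow !mult_INR !pow_INR.
  by field; split; apply: pow_nonzero; apply/not_0_INR/eqP; rewrite -lt0n ?indexg_gt0.
rewrite /Rdiv -sumR_mulr /e_term /PG.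
have := le_INR _ _ (leP (card_tuples_le_ngen_maximal G k)).
rewrite plus_INR INR_sum expn_Natpow => le_cardGk.
apply: (Rmult_le_reg_r (INR (#|G| ^ k)%nat)) => //.
rewrite /Rdiv Rmult_minus_distr_r !Rmult_assoc Rinv_l ?Rmult_1_r; last exact: Rgt_not_eq.
by rewrite Rmult_1_l; move: le_cardGk; set S := \big[Rplus/0]_(M | _) _; lra.
Qed.

End ProbabilityOfGeneration.

Section MaximalSubgroupsByType.

Variables (gT : finGroupType) (G : {group gT}) (k : nat).

Let inv_pow_ge0 (n : nat) : 0 <= / INR n ^ k := Rinv_ge0 (pow_le _ _ (pos_INR n)).

Let index_le_card (M : {group gT}) : (#|G : M|%g <= #|G|)%nat.
Proof. exact: dvdn_leq (cardG_gt0 G) (dvdn_indexg G M). Qed.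

Lemma sum_typeB_le :
  \big[Rplus/0]_(M : {group gT} | maximal M G && ~~ typeA G M) / INR #|G : M|%g ^ k <=
  \big[Rplus/0]_(5 <= n < #|G|.+1) (INR (mB G n) / INR n ^ k).
Proof.
apply: Rle_trans (sumR_le_fibres (g := fun M : {group gT} => #|G : M|%g)
  (s := index_iota 5 #|G|.+1) inv_pow_ge0 _) (Req_le _ _ _).
  by move=> M /andP[maxM B_M]; rewrite mem_index_iota typeB_index // ltnS index_le_card.
by apply: eq_bigr => n _; congr (INR _ * _); apply: eq_card => M; rewrite !inE andbA.
Qed.

Lemma sum_typeA_le :
  \big[Rplus/0]_(M : {group gT} | maximal M G && typeA G M) / INR #|G : M|%g ^ k <=
  \big[Rplus/0]_(p <- primes #|G|)
    \big[Rplus/0]_(1 <= n < #|G|.+1) (INR (mA G (p ^ n)%nat) / INR p ^ (n * k)).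
Proof.
pose s := [seq Nat.pow p n | p <- primes #|G|, n <- index_iota 1 #|G|.+1].
apply: Rle_trans (sumR_le_fibres (g := fun M : {group gT} => #|G : M|%g) (s := s)
  inv_pow_ge0 _) (Req_le _ _ _).
  move=> M /andP[maxM A_M]; have [p [n [p_pi n_gt0 n_le idxM]]] := typeA_index maxM A_M.
  by rewrite /= idxM expn_Natpow allpairs_f // mem_index_iota n_gt0 ltnS.
rewrite big_allpairs_dep; apply: eq_bigr => p _; apply: eq_bigr => n _.
rewrite pow_INR -pow_mult; congr (INR _ * _).
by apply: eq_card => M; rewrite !inE andbA.
Qed.

End MaximalSubgroupsByType.

Lemma e_term_le_mu_terms (gT : finGroupType) (G : {group gT}) (t i : nat) :
  e_term G (t + i) <=
  muStar_term G t i + \big[Rplus/0]_(p <- primes #|G|) mup_term G p t i.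
Proof.
apply: Rle_trans (e_term_le_sum_maximal G (t + i)) _.
rewrite (bigID (typeA G)) /= Rplus_comm.
exact: Rplus_le_compat (sum_typeB_le G (t + i)) (sum_typeA_le G (t + i)).
Qed.

Lemma infinite_sum_muStar_term (gT : finGroupType) (G : {group gT}) (t : nat) :
  infinite_sum (muStar_term G t)
    (\big[Rplus/0]_(5 <= n < #|G|.+1) geom_tail (INR (mB G n)) (INR n) t).
Proof.
apply: (infinite_sum_big (F := fun n i => INR (mB G n) / INR n ^ (t + i))) => n.
rewrite mem_index_iota => /andP[le5n _]; apply: infinite_sum_geom_tail.
by apply/(lt_INR 1)/ltP; apply: leq_trans le5n.
Qed.

Lemma infinite_sum_mup_term (gT : finGroupType) (G : {group gT}) (p t : nat) : prime p ->
  infinite_sum (mup_term G p t)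
    (\big[Rplus/0]_(1 <= n < #|G|.+1) geom_tail (INR (mA G (p ^ n)%nat)) (INR p ^ n) t).
Proof.
move=> p_pr.
apply: (infinite_sum_big (F := fun n i => INR (mA G (p ^ n)%nat) / INR p ^ (n * (t + i)))) => n.
rewrite mem_index_iota => /andP[n_gt0 _].
have gt1_pn : 1 < INR p ^ n.
  by apply: Rlt_pow_R1; [apply/(lt_INR 1)/ltP; apply: prime_gt1 | apply/ltP].
apply: Un_cv_ext (infinite_sum_geom_tail _ _ gt1_pn) => N.
by apply: sum_eq => i _; rewrite pow_mult.
Qed.

Theorem lemma2 (gT : finGroupType) (G : {group gT}) (t : nat) (ht : (0 < t)%nat) :
  exists (eG muS : R) (muP : nat -> R),
    infinite_sum (e_term G) eG /\
    infinite_sum (muStar_term G t) muS /\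
    (forall p : nat, p \in primes #|G| -> infinite_sum (mup_term G p t) (muP p)) /\
    eG <= INR t + muS + \big[Rplus/0]_(p <- primes #|G|) muP p.
Proof.
(* The bound holds for every t. *)
pose muS := \big[Rplus/0]_(5 <= n < #|G|.+1) geom_tail (INR (mB G n)) (INR n) t.
pose muP p := \big[Rplus/0]_(1 <= n < #|G|.+1) geom_tail (INR (mA G (p ^ n)%nat)) (INR p ^ n) t.
have sum_muS : infinite_sum (muStar_term G t) muS := infinite_sum_muStar_term G t.
have sum_muP p : p \in primes #|G| -> infinite_sum (mup_term G p t) (muP p).
  by rewrite mem_primes => /andP[p_pr _]; apply: infinite_sum_mup_term.
have [eG [sum_e le_eG]] := infinite_sum_le_shift (e_term_bounds G) (e_term_le_mu_terms G t)
  (infinite_sum_plus sum_muS (infinite_sum_big sum_muP)).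
by exists eG, muS, muP; rewrite Rplus_assoc.
Qed.
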